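(* Let $l$ and $m$ be positive integers and let $q(x)=x^6-(l+m+3)x^4+(lm+l+m+3)x^2-1$. Suppose $\pm\theta_1,\pm\theta_2,\pm\theta_3$ are the six roots of $q(x)$ in its splitting field over $\mathbb{Q}$. If $q(x)$ is reducible over $\mathbb{Q}$, then $1,\theta_1,\theta_2$ are linearly independent over $\mathbb{Q}$.
   Context: The roots of $q$ are simple, nonzero and real, and come in pairs $\pm\theta_j$; the labeling means the six roots are $\theta_1,-\theta_1,\theta_2,-\theta_2,\theta_3,-\theta_3$. *)

From HB Require Import structures.
From mathcomp Require Import all_boot all_order all_algebra algC.
Set Implicit Arguments. Unset Strict Implicit. Unset Printing Implicit Defensive.
Import Order.TTheory GRing.Theory Num.Theory.
Local Open Scope ring_scope.

Definition q_lm (l m : nat) : {poly rat} :=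
  'X^6 - ((l + m + 3)%N)%:R *: 'X^4
  + ((l * m + l + m + 3)%N)%:R *: 'X^2 - 1.

From HB Require Import structures.
From mathcomp Require Import all_boot all_order all_algebra algC separable.
From mathcomp Require Import ring lra zify.
Import Order.TTheory GRing.Theory Num.Theory.
Local Open Scope ring_scope.

(* Write q = p(X^2) with p a cubic.  By the rational root test p has no
   rational root, so p is irreducible, q is separable and no root of q is
   rational.  Suppose theta2 = a + b theta1 with b <> 0, and let g be the
   minimal polynomial of theta1.  As g(X) g(-X) = H(X^2) with H(theta1^2) = 0,
   p divides H and deg g >= 3.  If g and g(-X) were not coprime, g would be
   even, q would divide g and q would be irreducible; so g(X) g(-X) is q up
   to a constant and g is a cubic.  Now theta2 or -theta2 is a root of g of
   the form a' + b' theta1, and for an irreducible rational cubic this forces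
   a' + b' theta1 = theta1: g(b'X + a') = b'^3 g, and if b' <> 1 the rational
   fixed point a'/(1 - b') of x |-> b'x + a' would be a root of g, while for
   b' = 1 the invariance g(X + a') = g of a cubic forces a' = 0.  Hence
   theta2 = +-theta1, contradicting the separability of q. *)

Lemma rat_root_unit_cubic (A B : int) (r : rat) :
  r ^+ 3 - A%:~R * r ^+ 2 + B%:~R * r - 1 = 0 -> r = 1 \/ r = -1.
Proof.
case: (ratP r) => n d cop root_r; set D := d.+1%:Z.
have eq_nD : n ^+ 3 - A * n ^+ 2 * D + B * n * D ^+ 2 - D ^+ 3 = 0.
  apply: (@intr_inj rat); rewrite rmorph0 -(mulr0 (D%:~R ^+ 3)) -root_r.
  rewrite !(rmorphB, rmorphD, rmorphM, rmorphXn) /=; field.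
  by rewrite addrC natr1 pnatr_eq0.
have D_dvd : (d.+1 %| `|n| ^ 3)%N.
  rewrite -abszX; have -> : n ^+ 3 = D * (A * n ^+ 2 - B * n * D + D ^+ 2).
    by apply/eqP; rewrite -subr_eq0 -[X in _ == X]eq_nD; apply/eqP; ring.
  by rewrite abszM dvdn_mulr.
have n_dvd : (`|n| %| d.+1 ^ 3)%N.
  rewrite -[(d.+1 ^ 3)%N]/(`|D| ^ 3)%N -abszX.
  have -> : D ^+ 3 = n * (n ^+ 2 - A * n * D + B * D ^+ 2).
    by apply/eqP; rewrite -subr_eq0 -oppr_eq0 -[X in _ == X]eq_nD; apply/eqP; ring.
  by rewrite abszM dvdn_mulr.
have := coprime_dvdl D_dvd (coprimeXl 3 cop).
rewrite coprime_sym in cop; have := coprime_dvdl n_dvd (coprimeXl 3 cop).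
rewrite /coprime !gcdnn => /eqP n1 /eqP d0.
rewrite /D; case: d d0 {cop root_r eq_nD D_dvd n_dvd D} => // _.
by rewrite divr1; case: n n1 => [[|[]]|[]] //= _; [left|right].
Qed.

Lemma deriv_neq0 {R : numDomainType} (p : {poly R}) :
  (1 < size p)%N -> p^`() != 0.
Proof.
move=> p_gt1; apply/eqP => p'0.
have := coef_deriv p (size p).-2; rewrite p'0 coef0 => /esym/eqP.
have -> : (size p).-2.+1 = (size p).-1 by case: (size p) p_gt1 => [|[]].
rewrite mulrn_eq0 -lead_coefE lead_coef_eq0 => /orP[/eqP|/eqP p0].
  by case: (size p) p_gt1 => [|[]].
by move: p_gt1; rewrite p0 size_poly0.
Qed.

Lemma irredp_separable {R : numFieldType} (p : {poly R}) :
  irreducible_poly p -> separable_poly p.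
Proof.
move=> p_irr; rewrite separable_poly.unlock irreducible_poly_coprime //.
apply/negP => /(dvdp_leq (deriv_neq0 _ p_irr.1)).
by rewrite leqNgt lt_size_deriv ?irredp_neq0.
Qed.

Lemma separable_comp_sqr {R : numFieldType} (p : {poly R}) :
  separable_poly p -> ~~ root p 0 -> separable_poly (p \Po 'X^2).
Proof.
rewrite !separable_poly.unlock => sep_p p0.
rewrite deriv_comp derivXn coprimepMr coprimep_comp_poly //= -scaler_nat.
by rewrite coprimepZr ?pnatr_eq0 // expr1 coprimepX root_comp hornerXn expr0n.
Qed.

Lemma irredp_rootN {R : idomainType} (p : {poly R}) (x : R) :
  irreducible_poly p -> (2 < size p)%N -> ~~ root p x.
Proof.
move=> p_irr p_gt2; rewrite -dvdp_XsubCl; apply/negP => /(p_irr.2 _).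
rewrite size_XsubC => /(_ isT)/eqp_size; rewrite size_XsubC => p2.
by rewrite -p2 in p_gt2.
Qed.

Lemma eqp_irredp {R : idomainType} {p q : {poly R}} :
  p %= q -> irreducible_poly p -> irreducible_poly q.
Proof.
move=> pq [p_gt1 p_irr]; split=> [|f f_neq1 f_q]; first by rewrite -(eqp_size pq).
by rewrite -(eqp_dvdr _ pq) in f_q; exact: eqp_trans (p_irr f f_neq1 f_q) pq.
Qed.

Lemma uniq_roots_comp_sqr {F : numFieldType} {R : idomainType}
    (f : {rmorphism F -> R}) (p : {poly F}) (rs : seq R) :
  irreducible_poly p -> (2 < size p)%N ->
  map_poly f (p \Po 'X^2) = \prod_(r <- rs) ('X - r%:P) -> uniq rs.
Proof.
move=> p_irr p_gt2 p_roots.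
rewrite -separable_prod_XsubC -p_roots separable_map separable_comp_sqr //.
  exact: irredp_separable.
exact: irredp_rootN.
Qed.

Lemma poly_even_oddN {R : comNzRingType} (g : {poly R}) :
  g \Po - 'X = even_poly g \Po 'X^2 - (odd_poly g \Po 'X^2) * 'X.
Proof.
rewrite -{1}(poly_even_odd g) comp_polyD comp_polyM comp_polyX -!comp_polyA.
by rewrite comp_Xn_poly sqrrN mulrN.
Qed.

Lemma mul_comp_polyN {R : comNzRingType} (g : {poly R}) :
  g * (g \Po - 'X) = (even_poly g ^+ 2 - 'X * odd_poly g ^+ 2) \Po 'X^2.
Proof.
rewrite poly_even_oddN -{1}(poly_even_odd g) comp_polyB !comp_polyM comp_polyX.
ring.
Qed.

Lemma comp_polyN_even {R : numDomainType} (g : {poly R}) :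
  g \Po - 'X = g -> g = even_poly g \Po 'X^2.
Proof.
move=> /eqP; rewrite poly_even_oddN -{3}(poly_even_odd g) -subr_eq0 opprD.
rewrite addrACA subrr add0r -opprD oppr_eq0 -mulr2n -scaler_nat.
rewrite scale_poly_eq0 pnatr_eq0 /= => /eqP odd0.
by rewrite -{1}(poly_even_odd g) odd0 addr0.
Qed.

Lemma cubic_shift_inv {R : numDomainType} (g : {poly R}) (a : R) :
  size g = 4%N -> (forall y, g.[y + a] = g.[y]) -> a = 0.
Proof.
move=> g4 g_shift.
have g3 : g`_3 != 0.
  by rewrite -[3%N]/(4.-1)%N -g4 -lead_coefE lead_coef_eq0 -size_poly_eq0 g4.
have g_cubic y : g.[y] = g`_3 * y ^+ 3 + g`_2 * y ^+ 2 + g`_1 * y + g`_0.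
  by rewrite horner_coef g4 !big_ord_recr big_ord0 /=; ring.
pose D y := g.[y + a] - g.[y].
(* [D] is quadratic with leading coefficient [3 g_3 a]. *)
have : 6 * g`_3 * a = D 1 + D (-1) - 2 * D 0 by rewrite /D !g_cubic; ring.
rewrite /D !g_shift !subrr mulr0 subr0 addr0 => /eqP.
by rewrite !mulf_eq0 (negbTE g3) pnatr_eq0 /= => /eqP.
Qed.

Section MapComp.

Variables (R S : comNzRingType) (f : {rmorphism R -> S}).

Lemma root_map_comp_sqr (p : {poly R}) (x : S) :
  root (map_poly f (p \Po 'X^2)) x = root (map_poly f p) (x ^+ 2).
Proof. by rewrite map_comp_poly root_comp map_polyXn hornerXn. Qed.

Lemma root_map_comp_opp (p : {poly R}) (x : S) :
  root (map_poly f (p \Po - 'X)) x = root (map_poly f p) (- x).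
Proof. by rewrite map_comp_poly root_comp raddfN /= map_polyX hornerN hornerX. Qed.

End MapComp.

Local Notation pQtoC := (map_poly (ratr : rat -> algC)).

Lemma irredp_root_dvdp {p f : {poly rat}} {y : algC} :
  irreducible_poly p -> root (pQtoC p) y -> root (pQtoC f) y -> p %| f.
Proof.
move=> p_irr py fy; have [g [g_def _] g_min] := minCpolyP y.
have g_gt1 : (1 < size g)%N.
  by rewrite -(size_map_poly (@ratr algC)) -g_def size_minCpoly.
have /(eqp_dvdl f) <- : g %= p.
  by apply: p_irr.2; rewrite -?g_min // neq_ltn g_gt1 orbT.
by rewrite -g_min.
Qed.

Lemma minCpoly_irreducible {g : {poly rat}} {x : algC} :
  g \is monic -> (forall f, root (pQtoC f) x = (g %| f)) -> irreducible_poly g.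
Proof.
move=> g_monic g_min; have g0 := monic_neq0 g_monic.
have gx : root (pQtoC g) x by rewrite g_min.
split=> [|h h_neq1 /dvdpP[r g_def]].
  by rewrite -(size_map_poly (@ratr algC)) (root_size_gt1 _ gx) ?map_poly_eq0.
have r0 : r != 0 by apply: contra_neq g0; rewrite g_def => ->; rewrite mul0r.
have h0 : h != 0 by apply: contra_neq g0; rewrite g_def => ->; rewrite mulr0.
have h_gt1 : (1 < size h)%N by rewrite ltn_neqAle eq_sym h_neq1 size_poly_gt0.
move: gx; rewrite g_def rmorphM rootM !g_min => /orP[/(dvdp_leq r0)|g_h].
  by rewrite g_def size_mul // -subn1 leq_subLR addnC leq_add2r leqNgt h_gt1.
by rewrite /eqp -g_def g_h g_def dvdp_mull.
Qed.

Lemma size_irredp_sqr_le {p g : {poly rat}} {x : algC} :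
  irreducible_poly p -> root (pQtoC p) (x ^+ 2) -> g != 0 -> root (pQtoC g) x ->
  (size p <= size g)%N.
Proof.
move=> p_irr px2 g0 gx.
set H := even_poly g ^+ 2 - 'X * odd_poly g ^+ 2.
have gHX := mul_comp_polyN g; rewrite -/H in gHX.
have size_gN : size (g \Po - 'X) = size g.
  by rewrite size_comp_poly2 // size_polyN size_polyX.
have gN0 : g \Po - 'X != 0 by rewrite -size_poly_eq0 size_gN size_poly_eq0.
have H0 : H != 0.
  by apply: contra_neq (mulf_neq0 g0 gN0); rewrite gHX => ->; rewrite comp_poly0.
have pH : p %| H.
  apply: irredp_root_dvdp p_irr px2 _.
  by rewrite -root_map_comp_sqr -gHX rmorphM rootM gx.
have size_H : size H = size g.
  have := size_comp_poly H 'X^2; rewrite -gHX size_mul // size_gN size_polyXn /=.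
  have := size_poly_gt0 H; have := size_poly_gt0 g; rewrite H0 g0.
  by move: (size g) (size H) => m n; lia.
by rewrite -size_H dvdp_leq.
Qed.

Lemma irredp_cubic_affine_root {g : {poly rat}} {t : algC} {a b : rat} :
  irreducible_poly g -> size g = 4%N -> root (pQtoC g) t -> b != 0 ->
  root (pQtoC g) (ratr a + ratr b * t) -> ratr a + ratr b * t = t.
Proof.
move=> g_irr g4 gt b0 gs.
pose L := b *: ('X + (a / b)%:P).
have L_eval y : L.[y] = b * y + a.
  by rewrite /L hornerZ hornerD hornerX hornerC mulrDr mulrCA divff ?mulr1.
have gL_root : root (pQtoC (g \Po L)) t.
  rewrite map_comp_poly root_comp /L map_polyZ rmorphD /= map_polyX map_polyC /=.
  rewrite hornerZ hornerD hornerX hornerC fmorph_div mulrDr mulrCA.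
  by rewrite divff ?fmorph_eq0 // mulr1 addrC.
have size_L : size L = 2%N by rewrite size_scale // size_XaddC.
have /eqpP[[c1 c2] /= /andP[_ c2_0] gL_def] : g %= g \Po L.
  by rewrite -dvdp_size_eqp ?size_comp_poly2 // (irredp_root_dvdp g_irr gt gL_root).
have c1_def : c1 = c2 * b ^+ 3.
  have lg0 : lead_coef g != 0 by rewrite lead_coef_eq0 -size_poly_eq0 g4.
  have := congr1 lead_coef gL_def; rewrite !lead_coefZ lead_coef_comp ?size_L //.
  rewrite lead_coefZ lead_coefXaddC mulr1 g4 mulrCA [c1 * _]mulrC => /eqP.
  by rewrite (inj_eq (mulfI lg0)) => /eqP.
have g_affine y : g.[b * y + a] = b ^+ 3 * g.[y].
  have := congr1 (horner^~ y) gL_def; rewrite !hornerZ horner_comp L_eval c1_def.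
  by rewrite -mulrA => /mulfI ->.
have [b1|b_neq1] := eqVneq b 1.
  have a0 : a = 0.
    apply: (cubic_shift_inv g a g4) => y.
    by rewrite -[y in g.[y + a]]mul1r -b1 g_affine b1 expr1n mul1r.
  by rewrite a0 b1 rmorph0 rmorph1 add0r mul1r.
have b3_neq1 : b ^+ 3 != 1.
  rewrite expfS_eq1 (negbTE b_neq1) !big_ord_recr big_ord0 /= add0r expr0 expr1.
  by rewrite lt0r_neq0 //; nra.
pose r := a / (1 - b).
have r_fixed : b * r + a = r by rewrite /r; field; rewrite subr_eq0 eq_sym.
have : (1 - b ^+ 3) * g.[r] = 0 by rewrite mulrBl mul1r -{1}r_fixed g_affine subrr.
move/eqP; rewrite mulf_eq0 subr_eq0 eq_sym (negbTE b3_neq1) /= => gr.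
by move: gr; rewrite -/(root g r) (negbTE (irredp_rootN g r g_irr _)) ?g4.
Qed.

Section ReducibleEvenComposite.

Context {p g : {poly rat}} {x : algC}.
Hypotheses (p_irr : irreducible_poly p) (p4 : size p = 4%N).
Hypothesis q_red : ~ irreducible_poly (p \Po 'X^2).
Hypotheses (g_monic : g \is monic) (g_min : forall f, root (pQtoC f) x = (g %| f)).
Hypothesis qx : root (pQtoC (p \Po 'X^2)) x.

Local Notation q := (p \Po 'X^2).

Let g_irr : irreducible_poly g := minCpoly_irreducible g_monic g_min.
Let g0 : g != 0 := monic_neq0 g_monic.
Let gx : root (pQtoC g) x. Proof. by rewrite g_min. Qed.
Let g_q : g %| q. Proof. by rewrite -g_min. Qed.
Let g_ge4 : (4 <= size g)%N.
Proof. by rewrite -p4 (size_irredp_sqr_le p_irr _ g0 gx) // -root_map_comp_sqr. Qed.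

Lemma coprimep_minpoly_comp_opp : coprimep g (g \Po - 'X).
Proof.
rewrite irreducible_poly_coprime //; apply/negP => g_gN.
have /eqpP[[c1 c2] /= /andP[c1_0 _] gN_def] : g %= g \Po - 'X.
  by rewrite -dvdp_size_eqp // size_comp_poly2 // size_polyN size_polyX.
have g00 : g.[0] != 0 by apply: (irredp_rootN g 0 g_irr); apply: leq_trans g_ge4.
have c12 : c1 = c2.
  have := congr1 (horner^~ 0) gN_def.
  by rewrite !hornerZ horner_comp hornerN hornerX oppr0 => /mulIf; apply.
have g_even : g = even_poly g \Po 'X^2.
  by apply: comp_polyN_even; apply: (scalerI c1_0); rewrite gN_def c12.
have p_even : p %| even_poly g.
  apply: (irredp_root_dvdp (y := x ^+ 2) p_irr).
    by rewrite -root_map_comp_sqr.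
  by rewrite -root_map_comp_sqr -g_even.
apply: q_red; apply: (eqp_irredp _ g_irr).
by rewrite /eqp g_q g_even dvdp_comp_poly.
Qed.

Lemma minpoly_comp_opp_factor : size g = 4%N /\ g * (g \Po - 'X) %= q.
Proof.
have size_q : size q = 7%N.
  have := size_comp_poly p 'X^2; rewrite p4 size_polyXn.
  by case: (size q) => [|n] //= ->.
have q0 : q != 0 by rewrite -size_poly_eq0 size_q.
have size_gN : size (g \Po - 'X) = size g.
  by rewrite size_comp_poly2 // size_polyN size_polyX.
have gN0 : g \Po - 'X != 0 by rewrite -size_poly_eq0 size_gN size_poly_eq0.
have gN_q : g \Po - 'X %| q.
  have <- : q \Po - 'X = q by rewrite -comp_polyA comp_Xn_poly sqrrN.
  exact: dvdp_comp_poly.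
have ggN_q : g * (g \Po - 'X) %| q.
  by rewrite Gauss_dvdp ?coprimep_minpoly_comp_opp // g_q gN_q.
have size_ggN : size (g * (g \Po - 'X)) = (size g + size g).-1.
  by rewrite size_mul // size_gN.
have g4 : size g = 4%N.
  have := dvdp_leq q0 ggN_q; rewrite size_ggN size_q; move: g_ge4.
  by move: (size g) => n; lia.
by split=> //; rewrite -dvdp_size_eqp // size_ggN size_q g4.
Qed.

Lemma affine_root_minpoly_sign {y : algC} {a b : rat} :
  root (pQtoC q) y -> b != 0 -> y = ratr a + ratr b * x -> y = x \/ y = - x.
Proof.
move=> qy b0 y_def; have [g4 ggN_q] := minpoly_comp_opp_factor.
have : root (pQtoC (g * (g \Po - 'X))) y.
  by rewrite (eqp_root (_ : _ %= pQtoC q)) ?eqp_map.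
rewrite rmorphM rootM => /orP[gy|gNy].
  by left; rewrite y_def (irredp_cubic_affine_root g_irr g4 gx b0) // -y_def.
right; apply: oppr_inj; rewrite opprK.
have := irredp_cubic_affine_root (a := - a) (b := - b) g_irr g4 gx.
rewrite oppr_eq0 => /(_ b0).
by rewrite !rmorphN mulNr -opprD -y_def -root_map_comp_opp => /(_ gNy).
Qed.

End ReducibleEvenComposite.

Lemma ratr_affine_eq0 {u : algC} {c : rat} {t : algC} :
  c != 0 -> u + ratr c * t = 0 -> t = - u / ratr c.
Proof.
move=> c0 /eqP; rewrite addr_eq0 => /eqP ->.
by rewrite opprK mulrC mulKf ?fmorph_eq0.
Qed.

Definition cubic_lm (l m : nat) : {poly rat} :=
  'X^3 - (l + m + 3)%N%:R *: 'X^2 + (l * m + l + m + 3)%N%:R *: 'X - 1.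

Lemma q_lm_comp l m : q_lm l m = cubic_lm l m \Po 'X^2.
Proof.
rewrite /q_lm /cubic_lm !(comp_polyB, comp_polyD, comp_polyZ, comp_polyC, comp_polyX).
by rewrite !comp_Xn_poly -!exprM.
Qed.

Lemma size_cubic_lm l m : size (cubic_lm l m) = 4%N.
Proof.
rewrite /cubic_lm -!addrA size_polyDl size_polyXn //.
rewrite (leq_ltn_trans (size_polyD _ _)) // gtn_max size_polyN.
rewrite (leq_ltn_trans (size_scale_leq _ _)) ?size_polyXn //=.
rewrite (leq_ltn_trans (size_polyD _ _)) // gtn_max size_polyN size_poly1 andbT.
by rewrite (leq_ltn_trans (size_scale_leq _ _)) ?size_polyX.
Qed.

Lemma cubic_lm_root_free l m : (0 < l)%N -> (0 < m)%N ->
  forall r, ~~ root (cubic_lm l m) r.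
Proof.
move=> l_gt0 m_gt0 r; apply/negP; rewrite /root /cubic_lm.
rewrite !(hornerD, hornerN, hornerZ, hornerXn, hornerX, hornerC) => /eqP root_r.
have [] := @rat_root_unit_cubic (l + m + 3)%N (l * m + l + m + 3)%N r root_r;
  move=> r_unit; rewrite r_unit in root_r.
- have /eqP : ((l * m + l + m + 3)%N%:R : rat) = (l + m + 3)%N%:R.
    by apply/eqP; rewrite -subr_eq0 -[X in _ == X]root_r; apply/eqP; ring.
  by rewrite eqr_nat; lia.
- have /eqP : ((l * m + l + m + 3) + (l + m + 3) + 2)%N%:R = 0 :> rat.
    apply/eqP; rewrite -oppr_eq0 -[X in _ == X]root_r !natrD; apply/eqP; ring.
  by rewrite pnatr_eq0 addn2.
Qed.

Lemma cubic_lm_irreducible l m : (0 < l)%N -> (0 < m)%N ->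
  irreducible_poly (cubic_lm l m).
Proof.
move=> l_gt0 m_gt0; apply: cubic_irreducible; first by rewrite size_cubic_lm.
exact: cubic_lm_root_free.
Qed.

Theorem lemma2p1 (l m : nat) (hl : (0 < l)%N) (hm : (0 < m)%N)
  (t1 t2 t3 : algC)
  (hroots : map_poly (ratr : rat -> algC) (q_lm l m) =
     \prod_(r <- [:: t1; - t1; t2; - t2; t3; - t3]) ('X - r%:P))
  (hred : ~ irreducible_poly (q_lm l m)) :
  forall a b c : rat, ratr a + ratr b * t1 + ratr c * t2 = 0 ->
    [/\ a = 0, b = 0 & c = 0].
Proof.
move=> a b c abc; rewrite q_lm_comp in hroots hred.
have p4 := size_cubic_lm l m; have p_irr := cubic_lm_irreducible l m hl hm.
have q_root t : root (pQtoC (cubic_lm l m \Po 'X^2)) t =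
    (t \in [:: t1; - t1; t2; - t2; t3; - t3]) by rewrite hroots root_prod_XsubC.
have q_rat_free (r : rat) : ~~ root (pQtoC (cubic_lm l m \Po 'X^2)) (ratr r).
  by rewrite fmorph_root root_comp hornerXn cubic_lm_root_free.
have := uniq_roots_comp_sqr _ _ _ p_irr _ hroots; rewrite p4 /= !inE.
case/(_ isT)/andP => /norP[_ /norP[t1_neq_t2 /norP[t1_neq_Nt2 _]]] _.
have [c0 | c0] := eqVneq c 0.
  move: abc; rewrite c0 rmorph0 mul0r addr0.
  have [b0 | b0] := eqVneq b 0.
    by rewrite b0 rmorph0 mul0r addr0 => /eqP; rewrite fmorph_eq0 => /eqP.
  move=> /(ratr_affine_eq0 b0) t1_rat.
  by have := q_rat_free (- a / b); rewrite q_root fmorph_div rmorphN -t1_rat mem_head.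
have t2_def : t2 = ratr (- a / c) + ratr (- b / c) * t1.
  by rewrite (ratr_affine_eq0 c0 abc) !fmorph_div !rmorphN; field; rewrite fmorph_eq0.
have [b0 | b0] := eqVneq b 0.
  rewrite b0 oppr0 mul0r rmorph0 mul0r addr0 in t2_def.
  by have := q_rat_free (- a / c); rewrite q_root -t2_def !inE eqxx !orbT.
have [g [_ g_monic] g_min] := minCpolyP t1.
have := affine_root_minpoly_sign p_irr p4 hred g_monic g_min _ _ _ t2_def.
rewrite !q_root !inE !eqxx !orbT mulf_neq0 ?oppr_eq0 ?invr_eq0 // => /(_ isT isT isT).
by case=> t2E; [move: t1_neq_t2 | move: t1_neq_Nt2]; rewrite t2E ?opprK eqxx.
Qed.
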